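(* Let $r\in\mathbb{N}_0$, $m\in\mathbb{N}$ with $m\ge r+1$, $k:=m-r$, and let $x_0\le x_1\le\dots\le x_m$ be real numbers with $x_j<x_{j+r+1}$ for all $0\le j\le m-r-1$; put $d:=2(x_m-x_0)$. Let $(p,q)\in\mathcal{Q}_{m,r}$ satisfy $q-p+2\le m$. If $\varphi,\omega\in\Phi$ satisfy \[ \varphi(t)\le t^{k-1}\int_t^{d}u^{-k}\omega(u)\,du,\qquad t\in(0,d/2], \] then \[ \Lambda_{p,q,r}(x_0,\dots,x_m;\varphi)\le 2^{k^2}\Lambda_r(x_0,\dots,x_m;\omega). \]
   Context: $\Phi$ denotes the set of nondecreasing functions $\varphi\in C[0,\infty]$ with $\varphi(0)=0$. For ordered $y_0\le\dots\le y_n$: $\mathcal{Q}_{n,r}:=\{(p,q):0\le p,q\le n,\ q-p\ge r+1\}$, $y_{-1}:=y_0-(y_n-y_0)$, $y_{n+1}:=y_n+(y_n-y_0)$, $d(p,q):=\min\{y_{q+1}-y_p,y_q-y_{p-1}\}$, and for $\varphi\in\Phi$, $\Lambda_{p,q,r}(y_0,\dots,y_n;\varphi):=\frac{\int_{y_q-y_p}^{d(p,q)}u^{p+r-q-1}\varphi(u)du}{\prod_{i=0}^{p-1}(y_q-y_i)\prod_{i=q+1}^{n}(y_i-y_p)}$ (empty products $=1$), $\Lambda_r(y_0,\dots,y_n;\varphi):=\max_{(p,q)\in\mathcal{Q}_{n,r}}\Lambda_{p,q,r}(y_0,\dots,y_n;\varphi)$. *)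

From Stdlib Require Import Reals Lra Lia List ZArith.
From Coquelicot Require Import Coquelicot.
Open Scope R_scope.

Definition cont_0_inf (f : R -> R) : Prop :=
  (forall x, 0 <= x -> forall eps, 0 < eps -> exists delta, 0 < delta /\
     forall y, 0 <= y -> Rabs (y - x) < delta -> Rabs (f y - f x) < eps) /\
  (exists L, forall eps, 0 < eps -> exists M, forall y, M <= y -> Rabs (f y - L) < eps).

Definition Phi (f : R -> R) : Prop :=
  cont_0_inf f /\ (forall s t, 0 <= s -> s <= t -> f s <= f t) /\ f 0 = 0.

(* product_{i = a}^{b} f i  (empty product = 1 when b < a) *)
Definition prodR (f : nat -> R) (a b : nat) : R :=
  fold_right Rmult 1 (map f (seq a (S b - a))).

Definition y_next (n : nat) (y : nat -> R) (q : nat) : R :=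
  if Nat.ltb q n then y (S q) else y n + (y n - y 0%nat).

Definition y_prev (n : nat) (y : nat -> R) (p : nat) : R :=
  match p with O => y 0%nat - (y n - y 0%nat) | S p' => y p' end.

Definition dpq (n : nat) (y : nat -> R) (p q : nat) : R :=
  Rmin (y_next n y q - y p) (y q - y_prev n y p).

Definition Lambda_pqr (n : nat) (y : nat -> R) (phi : R -> R) (p q r : nat) : R :=
  RInt (fun u => powerRZ u (Z.of_nat p + Z.of_nat r - Z.of_nat q - 1) * phi u)
       (y q - y p) (dpq n y p q)
  / ((match p with O => 1 | S p' => prodR (fun i => y q - y i) 0 p' end)
     * prodR (fun i => y i - y p) (q + 1) n).

Definition Qnr (n r : nat) : list (nat * nat) :=
  filter (fun pq => Nat.leb (fst pq + r + 1) (snd pq))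
    (flat_map (fun p => map (fun q => (p, q)) (seq 0 (S n))) (seq 0 (S n))).

Fixpoint max_list (l : list R) : R :=
  match l with
  | nil => 0
  | x :: nil => x
  | x :: l' => Rmax x (max_list l')
  end.

(* Lambda_r = max over Q_{n,r} (nonempty whenever n >= r+1) *)
Definition Lambda_r (n : nat) (y : nat -> R) (phi : R -> R) (r : nat) : R :=
  max_list (map (fun pq => Lambda_pqr n y phi (fst pq) (snd pq) r) (Qnr n r)).

From Stdlib Require Import Reals Lra Lia List ZArith.
From Coquelicot Require Import Coquelicot.
Open Scope R_scope.

(* Write a = x_q - x_p, b = d(p,q), D(p,q) for the denominator of Lambda_{p,q,r},
   M = Lambda_r(x; omega), k = m - r = j + e + 1 with j = q - p - r + 1, and
   g(v) = v^-k omega(v).  On [a, b] the hypothesis gives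
   v^-j phi(v) <= v^e (int_v^b g) + v^e (int_b^d g).
   Integration by parts bounds the integral of the first term by
   int_a^b v^-j omega = D(p,q) Lambda_{p,q,r}(omega) <= D(p,q) M.
   For the second term, d(p,q) is the gap x_q' - x_p' of the pair (p',q') obtained
   by enlarging (p,q) by one index on the side realising the minimum, and every
   factor of D(p',q') is at most twice the matching factor of D(p,q), so
   d(p,q) D(p',q') <= 2^(m+p-q-1) D(p,q).  Iterating the enlargement up to (0,m),
   where d(0,m) = d, bounds (int_{d(p,q)}^d g) d(p,q)^n by 2^(n^2+1) 2^n D(p,q) M
   when n = m + p - q - 1 steps remain.  The two terms add up to
   (1 + 2^((e+1)^2+1) 2^(e+1)) D(p,q) M <= 2^((e+2)^2+1) D(p,q) M <= 2^(k^2) D(p,q) M. *)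

Lemma Phi_nonneg f t : Phi f -> 0 <= t -> 0 <= f t.
Proof. intros [_ [Hmono H0]] Ht. rewrite <- H0. apply Hmono; lra. Qed.

Lemma Phi_continuous f t : Phi f -> 0 < t -> continuous f t.
Proof.
  intros [[Hc _] _] Ht. apply continuity_pt_filterlim. intros eps Heps.
  destruct (Hc t (Rlt_le _ _ Ht) eps Heps) as [delta [Hdelta Hclose]].
  exists (Rmin delta t). split; [apply Rmin_pos; lra |].
  intros y [_ Hy]. simpl in Hy. unfold R_dist in *.
  assert (Hyd : Rabs (y - t) < delta) by (eapply Rlt_le_trans; [exact Hy | apply Rmin_l]).
  assert (Hyt : Rabs (y - t) < t) by (eapply Rlt_le_trans; [exact Hy | apply Rmin_r]).
  apply Rabs_def2 in Hyt. apply Hclose; lra.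
Qed.

Lemma powerRZ_opp_nat v n : powerRZ v (- Z.of_nat n) = / v ^ n.
Proof. rewrite powerRZ_neg', <- pow_powerRZ. reflexivity. Qed.

Lemma continuous_pow n t : continuous (fun v => v ^ n) t.
Proof. apply (@ex_derive_continuous R_AbsRing R_NormedModule). auto_derive. auto. Qed.

Lemma continuous_inv_pow_mul f n t : Phi f -> 0 < t -> continuous (fun v => / v ^ n * f v) t.
Proof.
  intros Hf Ht. apply (continuous_mult (fun v => / v ^ n) f); [| now apply Phi_continuous].
  apply (@ex_derive_continuous R_AbsRing R_NormedModule). auto_derive.
  apply pow_nonzero. lra.
Qed.

Lemma ex_RInt_pos (h : R -> R) a b :
  (forall t, 0 < t -> continuous h t) -> 0 < a -> 0 < b -> ex_RInt h a b.
Proof.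
  intros Hc Ha Hb. apply (ex_RInt_continuous (V := R_CompleteNormedModule)). intros t Ht. apply Hc.
  assert (0 < Rmin a b) by (apply Rmin_pos; auto). lra.
Qed.

Lemma is_derive_RInt_lower (g : R -> R) b t :
  (forall z, 0 < z -> continuous g z) -> 0 < b -> 0 < t ->
  is_derive (fun u => RInt g u b) t (- g t).
Proof.
  intros Hg Hb Ht. apply (is_derive_RInt' (V := R_CompleteNormedModule) g _ t b); [| now apply Hg].
  exists (mkposreal (t / 2) ltac:(lra)). intros y Hy.
  apply (RInt_correct (V := R_CompleteNormedModule)).
  assert (Hyt : Rabs (y - t) < t / 2) by exact Hy. apply Rabs_def2 in Hyt.
  apply ex_RInt_pos; auto; lra.
Qed.

Lemma continuous_RInt_lower (g : R -> R) b t :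
  (forall z, 0 < z -> continuous g z) -> 0 < b -> 0 < t ->
  continuous (fun u => RInt g u b) t.
Proof.
  intros Hg Hb Ht. apply (@ex_derive_continuous R_AbsRing R_NormedModule).
  exists (- g t). now apply is_derive_RInt_lower.
Qed.

Lemma is_derive_pow_mul_RInt_lower (g : R -> R) e b t :
  (forall z, 0 < z -> continuous g z) -> 0 < b -> 0 < t ->
  is_derive (fun u => u ^ S e * RInt g u b) t
    (INR (S e) * (t ^ e * RInt g t b) - t ^ S e * g t).
Proof.
  intros Hg Hb Ht.
  assert (Hd := is_derive_mult _ _ t _ _
    (is_derive_pow (fun v => v) (S e) t 1 (is_derive_id t))
    (is_derive_RInt_lower g b t Hg Hb Ht) Rmult_comm).
  replace (INR (S e) * (t ^ e * RInt g t b) - t ^ S e * g t) with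
    (plus (mult (INR (S e) * 1 * t ^ Nat.pred (S e)) (RInt g t b)) (mult (t ^ S e) (- g t))).
  - exact Hd.
  - unfold plus, mult; simpl. ring.
Qed.

(* Integration by parts with [G u = RInt g u b]: the boundary term [- a^(e+1) G a] is
   nonpositive and the factor [e + 1] is at least 1. *)
Lemma RInt_pow_mul_RInt_lower_le (g : R -> R) e a b :
  (forall z, 0 < z -> continuous g z) -> (forall z, 0 < z -> 0 <= g z) -> 0 < a <= b ->
  RInt (fun u => u ^ e * RInt g u b) a b <= RInt (fun u => u ^ S e * g u) a b.
Proof.
  intros Hg Hg0 [Ha Hab].
  set (G := fun u => RInt g u b).
  assert (HGc : forall z, 0 < z -> continuous G z)
    by (intros; apply continuous_RInt_lower; auto; lra).
  assert (HG0 : forall u, 0 < u <= b -> 0 <= G u).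
  { intros u Hu. apply RInt_ge_0; [lra | apply ex_RInt_pos; auto; lra | intros; apply Hg0; lra]. }
  assert (Hex1 : ex_RInt (fun u => u ^ e * G u) a b).
  { apply ex_RInt_pos; auto; try lra. intros z Hz.
    apply (continuous_mult (fun u => u ^ e) G); auto using continuous_pow. }
  assert (Hex2 : ex_RInt (fun u => u ^ S e * g u) a b).
  { apply ex_RInt_pos; auto; try lra. intros z Hz.
    apply (continuous_mult (fun u => u ^ S e) g); auto using continuous_pow. }
  assert (Hparts : is_RInt (fun u => INR (S e) * (u ^ e * G u) - u ^ S e * g u) a b
                     (b ^ S e * G b - a ^ S e * G a)).
  { apply (is_RInt_derive (fun u => u ^ S e * G u)); rewrite Rmin_left, Rmax_right by lra.
    - intros t Ht. apply is_derive_pow_mul_RInt_lower; auto; lra.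
    - intros t Ht.
      apply (continuous_minus (fun u => INR (S e) * (u ^ e * G u)) (fun u => u ^ S e * g u)).
      + apply (continuous_mult (fun _ => INR (S e)) (fun u => u ^ e * G u)).
        * apply continuous_const.
        * apply (continuous_mult (fun u => u ^ e) G); auto using continuous_pow; apply HGc; lra.
      + apply (continuous_mult (fun u => u ^ S e) g); auto using continuous_pow; apply Hg; lra. }
  apply (is_RInt_unique (V := R_CompleteNormedModule)) in Hparts.
  rewrite (RInt_minus (fun u => INR (S e) * (u ^ e * G u)) (fun u => u ^ S e * g u)),
    (RInt_scal (fun u => u ^ e * G u)) in Hparts; auto.
  2: { apply (ex_RInt_scal (V := R_NormedModule)). exact Hex1. }
  assert (HGb : G b = 0) by apply (RInt_point (V := R_CompleteNormedModule)).
  assert (HI : 0 <= RInt (fun u => u ^ e * G u) a b).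
  { apply RInt_ge_0; auto. intros u Hu. apply Rmult_le_pos; [apply pow_le; lra | apply HG0; lra]. }
  assert (Hbdry : 0 <= a ^ S e * G a) by (apply Rmult_le_pos; [apply pow_le | apply HG0]; lra).
  assert (HSe : 1 <= INR (S e)) by (apply (le_INR 1); lia).
  change (INR (S e) * RInt (fun u => u ^ e * G u) a b - RInt (fun u => u ^ S e * g u) a b
          = b ^ S e * G b - a ^ S e * G a) in Hparts.
  rewrite HGb in Hparts.
  change (RInt (fun u => u ^ e * G u) a b <= RInt (fun u => u ^ S e * g u) a b). nra.
Qed.

Lemma inv_pow_mul_bounds a c v e n w : 0 <= a <= v -> v <= c -> 0 < v -> 0 <= w ->
  a ^ n * (/ v ^ (e + n) * w) <= / v ^ e * w <= c ^ n * (/ v ^ (e + n) * w).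
Proof.
  intros Hav Hvc Hv Hw.
  assert (Hsplit : / v ^ e = v ^ n * / v ^ (e + n)).
  { rewrite pow_add. field. split; apply pow_nonzero; lra. }
  assert (0 <= / v ^ (e + n) * w) by (apply Rmult_le_pos; [apply Rlt_le, Rinv_0_lt_compat, pow_lt|]; lra).
  rewrite Hsplit, Rmult_assoc. split; apply Rmult_le_compat_r; auto; apply pow_incr; lra.
Qed.

Lemma RInt_pow_le a b e : 0 <= a <= b -> RInt (fun u => u ^ e) a b <= b ^ S e.
Proof.
  intros Hab. apply Rle_trans with (RInt (fun _ => b ^ e) a b).
  - apply RInt_le; try lra.
    + apply (ex_RInt_continuous (V := R_CompleteNormedModule)). intros; apply continuous_pow.
    + apply (ex_RInt_const (V := R_NormedModule)).
    + intros u Hu. apply pow_incr. lra.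
  - rewrite (RInt_const (V := R_CompleteNormedModule)).
    change (scal (b - a) (b ^ e)) with ((b - a) * b ^ e). simpl.
    assert (0 <= b ^ e) by (apply pow_le; lra). nra.
Qed.

Lemma pow2_sqr_succ_le n : 1 + 2 ^ (n * n + 1) * 2 ^ n <= 2 ^ (S n * S n + 1).
Proof.
  rewrite <- pow_add. set (N := (n * n + 1 + n)%nat).
  replace (S n * S n + 1)%nat with (S (N + n)) by (unfold N; lia).
  rewrite <- tech_pow_Rmult, pow_add.
  assert (1 <= 2 ^ N) by (apply pow_R1_Rle; lra).
  assert (1 <= 2 ^ n) by (apply pow_R1_Rle; lra). nra.
Qed.

Lemma RInt_Rmult_l (f : R -> R) c a b :
  ex_RInt f a b -> RInt (fun v => c * f v) a b = c * RInt f a b.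
Proof. apply (RInt_scal (V := R_CompleteNormedModule)). Qed.

Lemma inv_pow_mul_nonneg f n v : Phi f -> 0 < v -> 0 <= / v ^ n * f v.
Proof.
  intros Hf Hv. apply Rmult_le_pos; [apply Rlt_le, Rinv_0_lt_compat, pow_lt | apply Phi_nonneg]; auto; lra.
Qed.

Definition prod_list (l : list R) : R := fold_right Rmult 1 l.

Lemma prod_list_app l1 l2 : prod_list (l1 ++ l2) = prod_list l1 * prod_list l2.
Proof. induction l1 as [|a l1 IH]; simpl; [ring | unfold prod_list in *; rewrite IH; ring]. Qed.

Lemma prod_list_map_pos (f : nat -> R) l :
  (forall i, In i l -> 0 < f i) -> 0 < prod_list (map f l).
Proof.
  induction l as [|a l IH]; simpl; intros H; [lra |].
  apply Rmult_lt_0_compat; auto.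
Qed.

Lemma prod_list_map_nonneg (f : nat -> R) l :
  (forall i, In i l -> 0 <= f i) -> 0 <= prod_list (map f l).
Proof.
  induction l as [|a l IH]; simpl; intros H; [lra |].
  apply Rmult_le_pos; auto.
Qed.

Lemma prod_list_map_le (f g : nat -> R) c l :
  (forall i, In i l -> 0 <= f i <= c * g i) ->
  prod_list (map f l) <= c ^ length l * prod_list (map g l).
Proof.
  induction l as [|a l IH]; simpl; intros H; [lra |].
  destruct (H a (or_introl eq_refl)) as [Hf Hfg].
  assert (IH' := IH (fun i Hi => H i (or_intror Hi))).
  assert (0 <= prod_list (map f l)) by (apply prod_list_map_nonneg; intros; apply H; auto).
  replace (c * c ^ length l * (g a * prod_list (map g l)))
    with ((c * g a) * (c ^ length l * prod_list (map g l))) by ring.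
  apply Rmult_le_compat; auto.
Qed.

Lemma max_list_ge l y : In y l -> y <= max_list l.
Proof.
  induction l as [|a l IH]; simpl; [tauto |]. intros [<- | Hin].
  - destruct l; [lra | apply Rmax_l].
  - destruct l; [destruct Hin |]. eapply Rle_trans; [apply IH, Hin | apply Rmax_r].
Qed.

Section Nodes.

Variables (m r : nat) (x : nat -> R).
Hypothesis x_le_succ : forall j, (j < m)%nat -> x j <= x (S j).

Lemma x_le i j : (i <= j <= m)%nat -> x i <= x j.
Proof.
  intros [Hij Hjm]. induction Hij as [|j Hij IH]; [lra |].
  assert (x j <= x (S j)) by (apply x_le_succ; lia).
  assert (x i <= x j) by (apply IH; lia). lra.
Qed.

Definition lprod (p q : nat) : R := prod_list (map (fun i => x q - x i) (seq 0 p)).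
Definition rprod (p q : nat) : R := prod_list (map (fun i => x i - x p) (seq (S q) (m - q))).
Definition denom (p q : nat) : R := lprod p q * rprod p q.

Lemma Lambda_denom_eq p q :
  (match p with O => 1 | S p' => prodR (fun i => x q - x i) 0 p' end)
  * prodR (fun i => x i - x p) (q + 1) m = denom p q.
Proof.
  unfold denom, lprod, rprod, prodR, prod_list.
  replace (S m - (q + 1))%nat with (m - q)%nat by lia. rewrite Nat.add_1_r.
  destruct p; reflexivity.
Qed.

Lemma lprod_nonneg p q : (p <= q <= m)%nat -> 0 <= lprod p q.
Proof.
  intros Hpq. apply prod_list_map_nonneg. intros i Hi. apply in_seq in Hi.
  assert (x i <= x q) by (apply x_le; lia). lra.
Qed.

Lemma rprod_nonneg p q : (p <= q <= m)%nat -> 0 <= rprod p q.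
Proof.
  intros Hpq. apply prod_list_map_nonneg. intros i Hi. apply in_seq in Hi.
  assert (x p <= x i) by (apply x_le; lia). lra.
Qed.

Lemma denom_nonneg p q : (p <= q <= m)%nat -> 0 <= denom p q.
Proof. intros. apply Rmult_le_pos; [apply lprod_nonneg | apply rprod_nonneg]; lia. Qed.

Lemma denom_pos p q : (p <= q <= m)%nat -> x p < x q -> 0 < denom p q.
Proof.
  intros Hpq Hlt. apply Rmult_lt_0_compat; apply prod_list_map_pos;
    intros i Hi; apply in_seq in Hi.
  - assert (x i <= x p) by (apply x_le; lia). lra.
  - assert (x q <= x i) by (apply x_le; lia). lra.
Qed.

Lemma gap_le_dpq p q : (p <= q <= m)%nat -> x q - x p <= dpq m x p q.
Proof.
  intros Hpq. unfold dpq, y_next, y_prev. apply Rmin_glb.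
  - destruct (Nat.ltb_spec q m).
    + assert (x q <= x (S q)) by (apply x_le; lia). lra.
    + assert (q = m) by lia. subst. assert (x 0%nat <= x m) by (apply x_le; lia). lra.
  - destruct p as [|p0].
    + assert (x 0%nat <= x m) by (apply x_le; lia). lra.
    + assert (x p0 <= x (S p0)) by (apply x_le; lia). lra.
Qed.

Lemma dpq_le_left i p q : (i < p <= q)%nat -> (q <= m)%nat -> dpq m x p q <= x q - x i.
Proof.
  intros Hi Hq. unfold dpq, y_prev. destruct p as [|p0]; [lia |].
  assert (x i <= x p0) by (apply x_le; lia).
  assert (Rmin (y_next m x q - x (S p0)) (x q - x p0) <= x q - x p0) by apply Rmin_r. lra.
Qed.

Lemma dpq_le_right i p q : (p <= q < i)%nat -> (i <= m)%nat -> dpq m x p q <= x i - x p.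
Proof.
  intros Hi Hm. unfold dpq, y_next. destruct (Nat.ltb_spec q m); [| lia].
  assert (x (S q) <= x i) by (apply x_le; lia).
  assert (Rmin (x (S q) - x p) (x q - y_prev m x p) <= x (S q) - x p) by apply Rmin_l. lra.
Qed.

Lemma dpq_cases p q : (p <= q <= m)%nat -> (q + 1 <= m + p)%nat ->
  ((q < m)%nat /\ dpq m x p q = x (S q) - x p) \/
  (exists p0, p = S p0 /\ dpq m x p q = x q - x p0).
Proof.
  intros Hpq Hqp. unfold dpq, y_next, y_prev.
  destruct (Nat.ltb_spec q m) as [Hqm | Hqm]; destruct p as [|p0].
  - left. split; auto. apply Rmin_left.
    assert (x (S q) <= x m) by (apply x_le; lia).
    assert (x 0%nat <= x q) by (apply x_le; lia). lra.
  - unfold Rmin. destruct (Rle_dec _ _); [left | right; exists p0]; auto.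
  - lia.
  - right. exists p0. split; auto. assert (q = m) by lia. subst q. apply Rmin_right.
    assert (x (S p0) <= x m) by (apply x_le; lia).
    assert (x 0%nat <= x p0) by (apply x_le; lia). lra.
Qed.

Lemma denom_extend_right p q : (p <= q < m)%nat -> dpq m x p q = x (S q) - x p ->
  dpq m x p q * denom p (S q) <= 2 ^ p * denom p q.
Proof.
  intros Hpq Hd.
  assert (Hr : rprod p q = (x (S q) - x p) * rprod p (S q)).
  { unfold rprod. replace (m - q)%nat with (S (m - S q)) by lia. reflexivity. }
  assert (Hl : lprod p (S q) <= 2 ^ p * lprod p q).
  { unfold lprod. replace (2 ^ p) with (2 ^ length (seq 0 p)) by now rewrite length_seq.
    apply prod_list_map_le. intros i Hi. apply in_seq in Hi.
    assert (dpq m x p q <= x q - x i) by (apply dpq_le_left; lia).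
    assert (x i <= x p) by (apply x_le; lia).
    assert (x p <= x q <= x (S q)) by (split; apply x_le; lia). lra. }
  assert (x p <= x (S q)) by (apply x_le; lia).
  assert (0 <= (x (S q) - x p) * rprod p (S q)) by (apply Rmult_le_pos; [lra | apply rprod_nonneg; lia]).
  unfold denom. rewrite Hr, Hd. nra.
Qed.

Lemma denom_extend_left p q : (p < q <= m)%nat -> dpq m x (S p) q = x q - x p ->
  dpq m x (S p) q * denom p q <= 2 ^ (m - q) * denom (S p) q.
Proof.
  intros Hpq Hd.
  assert (Hl : lprod (S p) q = lprod p q * (x q - x p)).
  { unfold lprod. rewrite seq_S, map_app, prod_list_app. unfold prod_list; simpl. ring. }
  assert (Hr : rprod p q <= 2 ^ (m - q) * rprod (S p) q).
  { unfold rprod. replace (2 ^ (m - q)) with (2 ^ length (seq (S q) (m - q)))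
      by now rewrite length_seq.
    apply prod_list_map_le. intros i Hi. apply in_seq in Hi.
    assert (dpq m x (S p) q <= x i - x (S p)) by (apply dpq_le_right; lia).
    assert (x p <= x (S p)) by (apply x_le; lia).
    assert (x (S p) <= x q) by (apply x_le; lia). lra. }
  assert (x p <= x q) by (apply x_le; lia).
  assert (0 <= lprod p q * (x q - x p)) by (apply Rmult_le_pos; [apply lprod_nonneg; lia | lra]).
  unfold denom. rewrite Hl, Hd. nra.
Qed.

Lemma denom_step p q : (p <= q <= m)%nat -> (q + 1 <= m + p)%nat ->
  exists p' q', (p' <= p)%nat /\ (q <= q' <= m)%nat /\ (q' + p = q + p' + 1)%nat /\
    x q' - x p' = dpq m x p q /\
    dpq m x p q * denom p' q' <= 2 ^ (m + p - q - 1) * denom p q.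
Proof.
  intros Hpq Hqp.
  assert (HD := denom_nonneg p q Hpq).
  destruct (dpq_cases p q Hpq Hqp) as [[Hqm Hd] | [p0 [-> Hd]]].
  - exists p, (S q). repeat split; auto; try lia.
    eapply Rle_trans; [apply denom_extend_right; auto; lia |].
    apply Rmult_le_compat_r; [lra | apply Rle_pow; [lra | lia]].
  - exists p0, q. repeat split; auto; try lia.
    eapply Rle_trans; [apply denom_extend_left; auto; lia |].
    apply Rmult_le_compat_r; [lra | apply Rle_pow; [lra | lia]].
Qed.

Lemma dpq_le_span p q : (p <= q <= m)%nat -> (q + 1 <= m + p)%nat -> dpq m x p q <= x m - x 0%nat.
Proof.
  intros Hpq Hqp. destruct (dpq_cases p q Hpq Hqp) as [[Hqm Hd] | [p0 [Hp Hd]]]; rewrite Hd.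
  - assert (x (S q) <= x m) by (apply x_le; lia).
    assert (x 0%nat <= x p) by (apply x_le; lia). lra.
  - assert (x q <= x m) by (apply x_le; lia).
    assert (x 0%nat <= x p0) by (apply x_le; lia). lra.
Qed.

Lemma dpq_full : dpq m x 0 m = 2 * (x m - x 0%nat).
Proof.
  assert (x 0%nat <= x m) by (apply x_le; lia).
  unfold dpq, y_next, y_prev. rewrite Nat.ltb_irrefl, Rmin_left; [ring | lra].
Qed.

Lemma denom_full : denom 0 m = 1.
Proof. unfold denom, lprod, rprod, prod_list. rewrite Nat.sub_diag. simpl. ring. Qed.

Hypothesis x_lt_gap : forall j, (j + r + 1 <= m)%nat -> x j < x (j + r + 1)%nat.

Lemma gap_pos p q : (p + r + 1 <= q <= m)%nat -> 0 < x q - x p.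
Proof.
  intros Hpq. assert (x (p + r + 1)%nat <= x q) by (apply x_le; lia).
  assert (x p < x (p + r + 1)%nat) by (apply x_lt_gap; lia). lra.
Qed.

Lemma denom_pos_gap p q : (p + r + 1 <= q <= m)%nat -> 0 < denom p q.
Proof.
  intros Hpq. apply denom_pos; [lia |]. assert (0 < x q - x p) by (apply gap_pos; lia). lra.
Qed.

Lemma Lambda_pqr_eq f p q : (p + r + 1 <= q)%nat ->
  Lambda_pqr m x f p q r =
  RInt (fun v => / v ^ (q - p - r + 1) * f v) (x q - x p) (dpq m x p q) / denom p q.
Proof.
  intros Hpq. unfold Lambda_pqr. rewrite Lambda_denom_eq. f_equal. apply RInt_ext. intros v _.
  replace (Z.of_nat p + Z.of_nat r - Z.of_nat q - 1)%Z with (- Z.of_nat (q - p - r + 1))%Z by lia.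
  now rewrite powerRZ_opp_nat.
Qed.

Lemma Lambda_pqr_le_Lambda_r f p q : (p + r + 1 <= q <= m)%nat ->
  Lambda_pqr m x f p q r <= Lambda_r m x f r.
Proof.
  intros Hpq. unfold Lambda_r. apply max_list_ge.
  apply (in_map (fun pq => Lambda_pqr m x f (fst pq) (snd pq) r) _ (p, q)).
  unfold Qnr. apply filter_In. split.
  - apply in_flat_map. exists p. split; [apply in_seq; lia |]. apply in_map, in_seq. lia.
  - apply Nat.leb_le. simpl. lia.
Qed.

Section Weight.

Variable omega : R -> R.
Hypothesis omega_Phi : Phi omega.

Lemma ex_RInt_weight n a b : 0 < a -> 0 < b -> ex_RInt (fun v => / v ^ n * omega v) a b.
Proof. intros. apply ex_RInt_pos; auto. intros; now apply continuous_inv_pow_mul. Qed.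

Lemma RInt_weight_nonneg n a b : 0 < a <= b -> 0 <= RInt (fun v => / v ^ n * omega v) a b.
Proof.
  intros Hab. apply RInt_ge_0; [lra | apply ex_RInt_weight; lra |].
  intros; apply inv_pow_mul_nonneg; auto; lra.
Qed.

Lemma RInt_weight_le_denom p q : (p + r + 1 <= q <= m)%nat ->
  RInt (fun v => / v ^ (q - p - r + 1) * omega v) (x q - x p) (dpq m x p q)
  <= denom p q * Lambda_r m x omega r.
Proof.
  intros Hpq. assert (HD := denom_pos_gap p q Hpq).
  assert (H := Lambda_pqr_le_Lambda_r omega p q Hpq).
  rewrite Lambda_pqr_eq, Rle_div_l in H by lia || lra. lra.
Qed.

Lemma Lambda_r_nonneg : (r + 1 <= m)%nat -> 0 <= Lambda_r m x omega r.
Proof.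
  intros Hrm. eapply Rle_trans; [| apply (Lambda_pqr_le_Lambda_r omega 0 m); lia].
  rewrite Lambda_pqr_eq by lia. apply Rdiv_le_0_compat; [| apply denom_pos_gap; lia].
  apply RInt_weight_nonneg. split; [apply gap_pos; lia | apply gap_le_dpq; lia].
Qed.

Lemma RInt_tail_weight_le_denom n p q : (p + r + 1 <= q <= m)%nat -> (q - p - r + 1 + n = m - r)%nat ->
  (x q - x p) ^ n * RInt (fun v => / v ^ (m - r) * omega v) (x q - x p) (dpq m x p q)
  <= denom p q * Lambda_r m x omega r.
Proof.
  intros Hpq Hn. assert (Ha := gap_pos p q Hpq). assert (Hab := gap_le_dpq p q ltac:(lia)).
  eapply Rle_trans; [| apply RInt_weight_le_denom; lia].
  rewrite <- RInt_Rmult_l by (apply ex_RInt_weight; lra).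
  apply RInt_le; [lra | apply ex_RInt_pos; [| lra | lra] .. |].
  - intros. apply (continuous_mult (fun _ => (x q - x p) ^ n) (fun v => / v ^ (m - r) * omega v)).
    + apply continuous_const.
    + now apply continuous_inv_pow_mul.
  - intros; now apply continuous_inv_pow_mul.
  - intros v Hv. rewrite <- Hn.
    apply (inv_pow_mul_bounds (x q - x p) v v); auto; try lra. apply Phi_nonneg; auto; lra.
Qed.

Lemma RInt_tail_weight_full_le : (r + 1 <= m)%nat ->
  RInt (fun v => / v ^ (m - r) * omega v) (x m - x 0%nat) (2 * (x m - x 0%nat))
  <= 2 * (x m - x 0%nat) * Lambda_r m x omega r.
Proof.
  intros Hrm. assert (Ha := gap_pos 0 m ltac:(lia)). set (a := x m - x 0%nat) in *.
  assert (H := RInt_weight_le_denom 0 m ltac:(lia)).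
  rewrite dpq_full, denom_full, Rmult_1_l in H. fold a in H.
  eapply Rle_trans; [| apply Rmult_le_compat_l; [lra | exact H]].
  rewrite <- RInt_Rmult_l by (apply ex_RInt_weight; lra).
  apply RInt_le; [lra | apply ex_RInt_weight; lra | |].
  - apply ex_RInt_pos; [| lra | lra]. intros.
    apply (continuous_mult (fun _ => 2 * a) (fun v => / v ^ (m - 0 - r + 1) * omega v)).
    + apply continuous_const.
    + now apply continuous_inv_pow_mul.
  - intros v Hv. replace (m - 0 - r + 1)%nat with (m - r + 1)%nat by lia.
    rewrite <- (pow_1 (2 * a)).
    apply (inv_pow_mul_bounds 0 (2 * a) v); try lra. apply Phi_nonneg; auto; lra.
Qed.

Lemma RInt_tail_enlarge_le n p q p' q' :
  (p + r + 1 <= q <= m)%nat -> (q + S (S n) = m + p)%nat ->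
  (p' <= p)%nat -> (q <= q' <= m)%nat -> (q' + p = q + p' + 1)%nat ->
  x q' - x p' = dpq m x p q ->
  RInt (fun v => / v ^ (m - r) * omega v) (dpq m x p' q') (2 * (x m - x 0%nat))
    * dpq m x p' q' ^ n <= 2 ^ (n * n + 1) * 2 ^ n * denom p' q' * Lambda_r m x omega r ->
  RInt (fun v => / v ^ (m - r) * omega v) (dpq m x p q) (2 * (x m - x 0%nat)) * dpq m x p q ^ S n
  <= 2 ^ (S n * S n + 1) * (dpq m x p q * denom p' q' * Lambda_r m x omega r).
Proof.
  intros Hpq Hn Hp' Hq' Hsum Hb Htail.
  set (g := fun v => / v ^ (m - r) * omega v) in *.
  set (b := dpq m x p q) in *. set (b' := dpq m x p' q') in *.
  set (d := 2 * (x m - x 0%nat)) in *. set (M := Lambda_r m x omega r) in *.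
  assert (HM : 0 <= M) by (apply Lambda_r_nonneg; lia).
  assert (Hb0 : 0 < b) by (rewrite <- Hb; apply gap_pos; lia).
  assert (Hbb' : b <= b') by (rewrite <- Hb; apply gap_le_dpq; lia).
  assert (Hb'd : b' <= d) by (assert (b' <= x m - x 0%nat) by (apply dpq_le_span; lia);
                               assert (x 0%nat <= x m) by (apply x_le; lia); unfold d; lra).
  assert (Hhead : b ^ n * RInt g b b' <= denom p' q' * M).
  { rewrite <- Hb. apply RInt_tail_weight_le_denom; lia. }
  assert (HT : 0 <= RInt g b' d) by (apply RInt_weight_nonneg; lra).
  assert (Hpow : b ^ n * RInt g b' d <= b' ^ n * RInt g b' d)
    by (apply Rmult_le_compat_r; [| apply pow_incr]; lra).
  assert (HD' : 0 <= b * denom p' q' * M)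
    by (apply Rmult_le_pos; [apply Rmult_le_pos, Rlt_le, denom_pos_gap |]; lia || lra).
  rewrite <- (RInt_Chasles g b b' d) by (apply ex_RInt_weight; lra).
  apply Rle_trans with ((1 + 2 ^ (n * n + 1) * 2 ^ n) * (b * denom p' q' * M)).
  - assert (b * (b ^ n * RInt g b b') <= b * (denom p' q' * M)) by (apply Rmult_le_compat_l; lra).
    assert (b * (b ^ n * RInt g b' d) <= b * (2 ^ (n * n + 1) * 2 ^ n * denom p' q' * M))
      by (apply Rmult_le_compat_l; lra).
    unfold plus; simpl. lra.
  - apply Rmult_le_compat_r; [lra | apply pow2_sqr_succ_le].
Qed.

Lemma RInt_tail_dpq_le n p q : (p + r + 1 <= q <= m)%nat -> (q + S n = m + p)%nat ->
  RInt (fun v => / v ^ (m - r) * omega v) (dpq m x p q) (2 * (x m - x 0%nat)) * dpq m x p q ^ n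
  <= 2 ^ (n * n + 1) * 2 ^ n * denom p q * Lambda_r m x omega r.
Proof.
  revert p q. induction n as [|n IH]; intros p q Hpq Hn;
    destruct (denom_step p q ltac:(lia) ltac:(lia)) as (p' & q' & Hp' & Hq' & Hsum & Hb & Hstep);
    assert (HM : 0 <= Lambda_r m x omega r) by (apply Lambda_r_nonneg; lia).
  - assert (p' = 0%nat /\ q' = m) as [-> ->] by lia.
    replace (m + p - q - 1)%nat with 0%nat in Hstep by lia.
    rewrite denom_full, <- Hb in Hstep. rewrite <- Hb, pow_O, Rmult_1_r.
    eapply Rle_trans; [apply RInt_tail_weight_full_le; lia |]. simpl. nra.
  - replace (m + p - q - 1)%nat with (S n) in Hstep by lia.
    eapply Rle_trans; [apply (RInt_tail_enlarge_le n p q p' q'); auto; apply IH; lia |].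
    replace (2 ^ (S n * S n + 1) * 2 ^ S n * denom p q * Lambda_r m x omega r)
      with (2 ^ (S n * S n + 1) * ((2 ^ S n * denom p q) * Lambda_r m x omega r)) by ring.
    apply Rmult_le_compat_l; [apply pow_le; lra |]. apply Rmult_le_compat_r; lra.
Qed.

Lemma RInt_pow_mul_tail_le_denom p q e : (p + r + 1 <= q <= m)%nat -> (q + S (S e) = m + p)%nat ->
  RInt (fun u => u ^ e * RInt (fun v => / v ^ (m - r) * omega v) u (dpq m x p q))
    (x q - x p) (dpq m x p q)
  <= denom p q * Lambda_r m x omega r.
Proof.
  intros Hpq Hn.
  assert (Ha : 0 < x q - x p) by (apply gap_pos; lia).
  assert (Hab : x q - x p <= dpq m x p q) by (apply gap_le_dpq; lia).
  eapply Rle_trans.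
  { apply RInt_pow_mul_RInt_lower_le; [intros; now apply continuous_inv_pow_mul
                                      | intros; now apply inv_pow_mul_nonneg | lra]. }
  assert (Hweight : forall u, 0 < u ->
            / u ^ (q - p - r + 1) * omega u = u ^ S e * (/ u ^ (m - r) * omega u)).
  { intros u Hu. replace (m - r)%nat with (q - p - r + 1 + S e)%nat by lia.
    rewrite (pow_add u (q - p - r + 1) (S e)). field. split; apply pow_nonzero; lra. }
  rewrite <- (RInt_ext (fun v => / v ^ (q - p - r + 1) * omega v)).
  - apply RInt_weight_le_denom; lia.
  - intros u Hu. rewrite Rmin_left in Hu by lra. apply Hweight. lra.
Qed.

Section Phi_bound.

Variable phi : R -> R.
Hypothesis phi_Phi : Phi phi.
Hypothesis phi_le_tail : forall t, 0 < t <= x m - x 0%nat ->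
  phi t <= t ^ (m - r - 1) * RInt (fun v => / v ^ (m - r) * omega v) t (2 * (x m - x 0%nat)).

Lemma RInt_phi_le_split p q e : (p + r + 1 <= q <= m)%nat -> (q + S (S e) = m + p)%nat ->
  RInt (fun v => / v ^ (q - p - r + 1) * phi v) (x q - x p) (dpq m x p q)
  <= denom p q * Lambda_r m x omega r
     + RInt (fun v => / v ^ (m - r) * omega v) (dpq m x p q) (2 * (x m - x 0%nat))
       * dpq m x p q ^ S e.
Proof.
  intros Hpq Hn.
  set (j := (q - p - r + 1)%nat). set (g := fun v => / v ^ (m - r) * omega v).
  set (a := x q - x p). set (b := dpq m x p q). set (d := 2 * (x m - x 0%nat)).
  set (G := fun u => RInt g u b). set (T := RInt g b d).
  assert (Ha : 0 < a) by (apply gap_pos; lia).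
  assert (Hab : a <= b) by (apply gap_le_dpq; lia).
  assert (Hbd : b <= x m - x 0%nat) by (apply dpq_le_span; lia).
  assert (Hgc : forall z, 0 < z -> continuous g z) by (intros; now apply continuous_inv_pow_mul).
  assert (Hex_pow : ex_RInt (fun u => u ^ e) a b)
    by (apply ex_RInt_pos; [intros; apply continuous_pow | lra | lra]).
  assert (Hex_G : ex_RInt (fun u => u ^ e * G u) a b).
  { apply ex_RInt_pos; [| lra | lra]. intros z Hz.
    apply (continuous_mult (fun u => u ^ e) G);
      [apply continuous_pow | apply continuous_RInt_lower; auto; lra]. }
  assert (Hex_T : ex_RInt (fun u => T * u ^ e) a b).
  { apply (ex_RInt_scal (V := R_NormedModule)). exact Hex_pow. }
  apply Rle_trans with (RInt (fun u => u ^ e * G u + T * u ^ e) a b).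
  - apply RInt_le; [lra | apply ex_RInt_pos; [intros; now apply continuous_inv_pow_mul | lra | lra]
                   | apply (ex_RInt_plus (V := R_NormedModule)); auto |].
    intros u Hu.
    assert (Hphi : phi u <= u ^ (m - r - 1) * RInt g u d) by (apply phi_le_tail; lra).
    rewrite <- (RInt_Chasles g u b d) in Hphi by (apply ex_RInt_weight; unfold d; lra).
    apply Rle_trans with (/ u ^ j * (u ^ (j + e) * (G u + T))).
    + apply Rmult_le_compat_l; [apply Rlt_le, Rinv_0_lt_compat, pow_lt; lra |].
      replace (j + e)%nat with (m - r - 1)%nat by lia. exact Hphi.
    + right. rewrite pow_add. field. apply pow_nonzero. lra.
  - rewrite (RInt_plus (fun u => u ^ e * G u) (fun u => T * u ^ e)), RInt_Rmult_l by auto.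
    apply Rplus_le_compat.
    + apply RInt_pow_mul_tail_le_denom; lia.
    + apply Rmult_le_compat_l; [apply RInt_weight_nonneg; unfold d; lra | apply RInt_pow_le; lra].
Qed.

End Phi_bound.

End Weight.

End Nodes.

Theorem lemma3p2 (r m : nat) (x : nat -> R) (p q : nat) (phi omega : R -> R) :
  (r + 1 <= m)%nat ->
  (forall j, (j < m)%nat -> x j <= x (S j)) ->
  (forall j, (j + r + 1 <= m)%nat -> x j < x (j + r + 1)%nat) ->
  (p <= m)%nat -> (q <= m)%nat -> (p + r + 1 <= q)%nat ->
  (q + 2 <= m + p)%nat ->
  Phi phi -> Phi omega ->
  (forall t, 0 < t <= 2 * (x m - x 0%nat) / 2 ->
     phi t <= t ^ (m - r - 1) *
       RInt (fun u => powerRZ u (- Z.of_nat (m - r)) * omega u) t (2 * (x m - x 0%nat))) ->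
  Lambda_pqr m x phi p q r <= 2 ^ ((m - r) * (m - r)) * Lambda_r m x omega r.
Proof.
  intros Hrm Hmono Hgap Hp Hq Hpq Hqp Hphi Homega Hphi_le.
  set (e := (m + p - q - 2)%nat).
  assert (Hle : forall t, 0 < t <= x m - x 0%nat -> phi t <= t ^ (m - r - 1)
                  * RInt (fun v => / v ^ (m - r) * omega v) t (2 * (x m - x 0%nat))).
  { intros t Ht. rewrite <- (RInt_ext (fun u => powerRZ u (- Z.of_nat (m - r)) * omega u)).
    - apply Hphi_le. lra.
    - intros v _. now rewrite powerRZ_opp_nat. }
  assert (HD := denom_pos_gap m r x Hmono Hgap p q ltac:(lia)).
  assert (HM := Lambda_r_nonneg m r x Hmono Hgap omega Homega Hrm).
  assert (Htail := RInt_tail_dpq_le m r x Hmono Hgap omega Homega (S e) p q ltac:(lia) ltac:(lia)).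
  assert (Hsplit := RInt_phi_le_split m r x Hmono Hgap omega Homega phi Hphi Hle p q e ltac:(lia) ltac:(lia)).
  assert (Hpow : 2 ^ (S (S e) * S (S e) + 1) <= 2 ^ ((m - r) * (m - r)))
    by (apply Rle_pow; [lra | nia]).
  assert (HPB := pow2_sqr_succ_le (S e)).
  rewrite Lambda_pqr_eq, Rle_div_l by lia || lra.
  assert (0 <= denom m x p q * Lambda_r m x omega r) by (apply Rmult_le_pos; lra).
  nra.
Qed.
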